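(* For every simulation budget $T>0$, the function $w\mapsto \mathrm{APCS}(w)$ is concave on the open orthant $\{w=(w_1,\dots,w_k)\in\mathbb{R}^k : w_i>0 \text{ for all } i\in\mathcal{K}\}$. Consequently, maximizing $\mathrm{APCS}(w)$ subject to $\sum_{i\in\mathcal{K}} w_i=1$, $w_i> 0$ ($i\in\mathcal{K}$) is a convex optimization problem.
   Context: Let $k\ge 2$ and $\mathcal{K}=\{1,\dots,k\}$. For each $i\in\mathcal{K}$ fix real numbers $\mu_i$ and $\sigma_i>0$. Let $b\in\mathcal{K}$ be the unique index with $\mu_b<\mu_i$ for all $i\neq b$, and let $\mathcal{K}'=\mathcal{K}\setminus\{b\}$. Fix $T>0$. For $i\in\mathcal{K}'$ put $\delta_{i,b}=\mu_i-\mu_b>0$. For $w$ with all $w_i>0$ define $\sigma_{i,b}(w)=\sqrt{\sigma_i^2/(w_iT)+\sigma_b^2/(w_bT)}$ and $$\mathrm{APCS}(w)=1-\sum_{i\in\mathcal{K}'}\Phi\!\left(-\frac{\delta_{i,b}}{\sigma_{i,b}(w)}\right),$$ where $\Phi$ is the standard normal cumulative distribution function. *)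

(* Indices of K = {1..k} are represented by
   0..k-1 (nat), vectors by functions nat -> R (only coordinates < k matter). *)
From Stdlib Require Import Reals.
From Coquelicot Require Import Coquelicot.
Open Scope R_scope.

Definition std_normal_pdf (t : R) : R := exp (- (t ^ 2) / 2) / sqrt (2 * PI).
Definition Phi (x : R) : R :=
  RInt_gen std_normal_pdf (Rbar_locally m_infty) (at_point x).

Definition sum_except (k b : nat) (f : nat -> R) : R :=
  sum_f_R0 (fun i => if Nat.eq_dec i b then 0 else f i) (k - 1).

Definition sigma_ib (T : R) (sigma : nat -> R) (b i : nat) (w : nat -> R) : R :=
  sqrt (sigma i ^ 2 / (w i * T) + sigma b ^ 2 / (w b * T)).

Definition APCS (k b : nat) (T : R) (mu sigma : nat -> R) (w : nat -> R) : R :=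
  1 - sum_except k b
        (fun i => Phi (- ((mu i - mu b) / sigma_ib T sigma b i w))).

Definition pos_orthant (k : nat) (w : nat -> R) : Prop :=
  forall i, (i < k)%nat -> 0 < w i.

Definition concave_on (D : (nat -> R) -> Prop) (F : (nat -> R) -> R) : Prop :=
  forall (w v : nat -> R) (t : R), D w -> D v -> 0 <= t <= 1 ->
    t * F w + (1 - t) * F v <= F (fun i => t * w i + (1 - t) * v i).

Definition convex_set (D : (nat -> R) -> Prop) : Prop :=
  forall (w v : nat -> R) (t : R), D w -> D v -> 0 <= t <= 1 ->
    D (fun i => t * w i + (1 - t) * v i).

Definition simplex_feasible (k : nat) (w : nat -> R) : Prop :=
  pos_orthant k w /\ sum_f_R0 w (k - 1) = 1.

(* Each summand of APCS is Phi (- delta_i * z_i (w)), with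
     z_i (w) = 1 / sqrt (A_i / w_i + C / w_b),  A_i = sigma_i^2 / T, C = sigma_b^2 / T.
   1. z_i is concave on the open quadrant: z_i = sqrt (H (w_i / A_i, w_b / C)) where
      H P Q = 1 / (1/P + 1/Q) is concave (it is an infimum of linear functions in
      (P, Q), see [harm_le_quadratic]) and sqrt is concave and nondecreasing.
   2. Phi is nondecreasing and convex on (-oo, 0], because its density is
      nonnegative and nondecreasing there; this requires first that the improper
      integral defining Phi exists, which follows from the bound pdf x <= exp x
      for x <= -2.
   3. Since delta_i * z_i >= 0 is concave, Phi (- delta_i * z_i) is convex; summing
      over i <> b gives concavity of APCS.  The feasible set is an intersection of
      the (convex) open orthant with an affine hyperplane. *)
From Stdlib Require Import Reals Lra Psatz Lia.
From Coquelicot Require Import Coquelicot.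
Open Scope R_scope.

Definition harm (P Q : R) : R := 1 / (1 / P + 1 / Q).

(* [harm P Q] is the minimum over l of l^2 P + (1-l)^2 Q, attained at l = Q/(P+Q). *)
Lemma harm_le_quadratic (P Q l : R) : 0 < P -> 0 < Q ->
  harm P Q <= l ^ 2 * P + (1 - l) ^ 2 * Q.
Proof.
  intros HP HQ. unfold harm.
  replace (1 / (1 / P + 1 / Q)) with (P * Q / (P + Q)) by (field; lra).
  apply Rmult_le_reg_r with (P + Q); [lra |].
  unfold Rdiv. rewrite Rmult_assoc, Rinv_l, Rmult_1_r by lra.
  pose proof (pow2_ge_0 (l * P - (1 - l) * Q)). nra.
Qed.

Lemma harm_attained (P Q : R) : 0 < P -> 0 < Q ->
  harm P Q = (Q / (P + Q)) ^ 2 * P + (1 - Q / (P + Q)) ^ 2 * Q.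
Proof. intros HP HQ. unfold harm. field. lra. Qed.

(* As an infimum of linear functions, [harm] is concave on the open quadrant. *)
Lemma harm_concave (P1 Q1 P2 Q2 t : R) :
  0 < P1 -> 0 < Q1 -> 0 < P2 -> 0 < Q2 -> 0 <= t <= 1 ->
  t * harm P1 Q1 + (1 - t) * harm P2 Q2
  <= harm (t * P1 + (1 - t) * P2) (t * Q1 + (1 - t) * Q2).
Proof.
  intros HP1 HQ1 HP2 HQ2 Ht.
  set (P := t * P1 + (1 - t) * P2). set (Q := t * Q1 + (1 - t) * Q2).
  assert (HP : 0 < P) by (unfold P; nra). assert (HQ : 0 < Q) by (unfold Q; nra).
  set (l := Q / (P + Q)).
  rewrite (harm_attained P Q HP HQ). fold l.
  pose proof (harm_le_quadratic P1 Q1 l HP1 HQ1) as H1.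
  pose proof (harm_le_quadratic P2 Q2 l HP2 HQ2) as H2.
  apply Rmult_le_compat_l with (r := t) in H1; [| lra].
  apply Rmult_le_compat_l with (r := 1 - t) in H2; [| lra].
  unfold P, Q. nra.
Qed.

Lemma harm_pos (P Q : R) : 0 < P -> 0 < Q -> 0 < harm P Q.
Proof.
  intros HP HQ. unfold harm. apply Rdiv_lt_0_compat; [lra |].
  apply Rplus_lt_0_compat; apply Rdiv_lt_0_compat; lra.
Qed.

Lemma sqrt_concave (a b t : R) : 0 <= a -> 0 <= b -> 0 <= t <= 1 ->
  t * sqrt a + (1 - t) * sqrt b <= sqrt (t * a + (1 - t) * b).
Proof.
  intros Ha Hb Ht. pose proof (sqrt_pos a). pose proof (sqrt_pos b).
  rewrite <- (sqrt_pow2 (t * sqrt a + (1 - t) * sqrt b))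
    by (apply Rplus_le_le_0_compat; apply Rmult_le_pos; lra).
  apply sqrt_le_1_alt.
  assert (Hgap : t * a + (1 - t) * b - (t * sqrt a + (1 - t) * sqrt b) ^ 2
                 = t * (1 - t) * (sqrt a - sqrt b) ^ 2).
  { rewrite <- (sqrt_sqrt a Ha) at 1. rewrite <- (sqrt_sqrt b Hb) at 1. ring. }
  assert (0 <= t * (1 - t) * (sqrt a - sqrt b) ^ 2)
    by (apply Rmult_le_pos; [nra | apply pow2_ge_0]).
  lra.
Qed.

Lemma inv_sqrt_sum_eq (A C x y : R) : 0 < A -> 0 < C -> 0 < x -> 0 < y ->
  1 / sqrt (A / x + C / y) = sqrt (harm (x / A) (y / C)).
Proof.
  intros HA HC Hx Hy. unfold Rdiv at 1. rewrite Rmult_1_l, <- sqrt_inv.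
  f_equal. unfold harm. field. repeat split; try lra; nra.
Qed.

Lemma inv_sqrt_sum_concave (A C x1 y1 x2 y2 t : R) :
  0 < A -> 0 < C -> 0 < x1 -> 0 < y1 -> 0 < x2 -> 0 < y2 -> 0 <= t <= 1 ->
  t * (1 / sqrt (A / x1 + C / y1)) + (1 - t) * (1 / sqrt (A / x2 + C / y2))
  <= 1 / sqrt (A / (t * x1 + (1 - t) * x2) + C / (t * y1 + (1 - t) * y2)).
Proof.
  intros HA HC Hx1 Hy1 Hx2 Hy2 Ht.
  assert (Hdiv : forall x D, 0 < x -> 0 < D -> 0 < x / D)
    by (intros; apply Rdiv_lt_0_compat; lra).
  rewrite !inv_sqrt_sum_eq by (auto; nra).
  replace ((t * x1 + (1 - t) * x2) / A) with (t * (x1 / A) + (1 - t) * (x2 / A))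
    by (field; lra).
  replace ((t * y1 + (1 - t) * y2) / C) with (t * (y1 / C) + (1 - t) * (y2 / C))
    by (field; lra).
  eapply Rle_trans.
  - apply sqrt_concave; [left; apply harm_pos; auto .. | exact Ht].
  - apply sqrt_le_1_alt, harm_concave; auto.
Qed.

Lemma sqrt2pi_pos : 0 < sqrt (2 * PI).
Proof. apply sqrt_lt_R0. pose proof PI_RGT_0. lra. Qed.

Lemma sqrt2pi_ge1 : 1 <= sqrt (2 * PI).
Proof. rewrite <- sqrt_1. apply sqrt_le_1_alt. pose proof PI2_1. lra. Qed.

Lemma pdf_ge0 (x : R) : 0 <= std_normal_pdf x.
Proof.
  unfold std_normal_pdf. pose proof sqrt2pi_pos. pose proof (exp_pos (- x ^ 2 / 2)).
  left. apply Rdiv_lt_0_compat; lra.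
Qed.

Lemma pdf_ex_RInt (a b : R) : ex_RInt std_normal_pdf a b.
Proof.
  apply (@ex_RInt_continuous R_CompleteNormedModule). intros x _.
  apply (@ex_derive_continuous R_AbsRing R_NormedModule). unfold std_normal_pdf.
  pose proof sqrt2pi_pos. auto_derive. lra.
Qed.

Lemma pdf_nondecr_nonpos (x y : R) : x <= y <= 0 ->
  std_normal_pdf x <= std_normal_pdf y.
Proof.
  intros Hxy. unfold std_normal_pdf. pose proof sqrt2pi_pos.
  apply Rmult_le_compat_r; [left; apply Rinv_0_lt_compat; lra |].
  destruct (Req_dec (- x ^ 2 / 2) (- y ^ 2 / 2)) as [E | E]; [rewrite E; lra |].
  left. apply exp_increasing. nra.
Qed.

Lemma pdf_le_exp (x : R) : x <= -2 -> std_normal_pdf x <= exp x.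
Proof.
  intros Hx. unfold std_normal_pdf. pose proof sqrt2pi_ge1.
  assert (Hexp : exp (- x ^ 2 / 2) <= exp x).
  { destruct (Req_dec (- x ^ 2 / 2) x) as [E | E]; [rewrite E; lra |].
    left. apply exp_increasing. nra. }
  pose proof (exp_pos (- x ^ 2 / 2)).
  apply Rle_trans with (exp (- x ^ 2 / 2) * 1); [unfold Rdiv | lra].
  apply Rmult_le_compat_l; [lra |].
  rewrite <- Rinv_1. apply Rinv_le_contravar; lra.
Qed.

Lemma pdf_tail_integral_le (u v : R) : u <= v <= -2 ->
  RInt std_normal_pdf u v <= exp v.
Proof.
  intros Huv.
  assert (HE : is_RInt exp u v (minus (exp v) (exp u))).
  { apply (is_RInt_derive exp exp); intros x _; [apply is_derive_exp |].
    apply (@ex_derive_continuous R_AbsRing R_NormedModule).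
    exists (exp x). apply is_derive_exp. }
  apply Rle_trans with (RInt exp u v).
  - apply RInt_le; [lra | apply pdf_ex_RInt | eexists; eauto |].
    intros x Hx. apply pdf_le_exp. lra.
  - rewrite (is_RInt_unique _ _ _ _ HE). unfold minus, plus, opp; simpl.
    pose proof (exp_pos u). lra.
Qed.

Lemma pdf_tail_small (eps : posreal) (p q : R) :
  p <= q -> q < Rmin (-2) (ln eps) -> 0 <= RInt std_normal_pdf p q < eps.
Proof.
  intros Hpq Hq. pose proof (Rmin_l (-2) (ln eps)). pose proof (Rmin_r (-2) (ln eps)).
  split.
  - apply RInt_ge_0; [exact Hpq | apply pdf_ex_RInt | intros; apply pdf_ge0].
  - apply Rle_lt_trans with (exp q); [apply pdf_tail_integral_le; lra |].
    rewrite <- (exp_ln eps) by (destruct eps; simpl; lra).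
    apply exp_increasing. lra.
Qed.

(* The improper integral defining [Phi] exists (Cauchy criterion at -oo). *)
Lemma Phi_ex (x : R) :
  ex_RInt_gen std_normal_pdf (Rbar_locally m_infty) (at_point x).
Proof.
  assert (Hlim : exists l : R, filterlim (fun a => RInt std_normal_pdf a x)
                                 (Rbar_locally m_infty) (locally l)).
  { apply (@Hierarchy.filterlim_locally_cauchy R R_CompleteSpace
             (Rbar_locally m_infty) _).
    intros eps. exists (fun a => a < Rmin (-2) (ln eps)).
    split; [exists (Rmin (-2) (ln eps)); auto |].
    intros u v Hu Hv.
    change (Rabs (RInt std_normal_pdf v x - RInt std_normal_pdf u x) < eps).
    assert (Hchasles : forall p q, RInt std_normal_pdf p x
                        = RInt std_normal_pdf p q + RInt std_normal_pdf q x).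
    { intros p q. symmetry. apply (RInt_Chasles std_normal_pdf p q x); apply pdf_ex_RInt. }
    destruct (Rle_dec u v) as [Huv | Hvu].
    - rewrite (Hchasles u v). pose proof (pdf_tail_small eps u v Huv Hv).
      rewrite Rabs_left1; lra.
    - rewrite (Hchasles v u). pose proof (pdf_tail_small eps v u ltac:(lra) Hu).
      rewrite Rabs_right; lra. }
  destruct Hlim as [l Hl]. exists l.
  intros P HP.
  exists (fun a => P (RInt std_normal_pdf a x)) (fun b => b = x);
    [exact (Hl P HP) | reflexivity |].
  intros a b Ha Hb. subst b. exists (RInt std_normal_pdf a x). split; [| exact Ha].
  apply (RInt_correct std_normal_pdf a x), pdf_ex_RInt.
Qed.

Lemma Phi_diff (x y : R) : Phi x = Phi y + RInt std_normal_pdf y x.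
Proof.
  unfold Phi.
  rewrite <- (RInt_gen_Chasles std_normal_pdf y (Phi_ex y)).
  - rewrite RInt_gen_at_point; [reflexivity | apply pdf_ex_RInt].
  - apply ex_RInt_gen_at_point, pdf_ex_RInt.
Qed.

Lemma Phi_nondecr (x y : R) : x <= y -> Phi x <= Phi y.
Proof.
  intros Hxy. rewrite (Phi_diff y x).
  assert (0 <= RInt std_normal_pdf x y)
    by (apply RInt_ge_0; [exact Hxy | apply pdf_ex_RInt | intros; apply pdf_ge0]).
  lra.
Qed.

Lemma RInt_nondecr_bounds (f : R -> R) (a b : R) : a <= b -> ex_RInt f a b ->
  (forall x y, a <= x <= y -> y <= b -> f x <= f y) ->
  (b - a) * f a <= RInt f a b <= (b - a) * f b.
Proof.
  intros Hab Hf Hmono.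
  assert (Hconst : forall c, RInt (fun _ => c) a b = (b - a) * c).
  { intros c. rewrite RInt_const. unfold scal; simpl; unfold mult; simpl. ring. }
  rewrite <- !Hconst. split.
  - apply RInt_le; [exact Hab | apply ex_RInt_const | exact Hf |].
    intros x Hx. apply Hmono; lra.
  - apply RInt_le; [exact Hab | exact Hf | apply ex_RInt_const |].
    intros x Hx. apply Hmono; lra.
Qed.

Lemma Phi_convex_ordered (x1 x2 t : R) : x1 <= x2 <= 0 -> 0 <= t <= 1 ->
  Phi (t * x1 + (1 - t) * x2) <= t * Phi x1 + (1 - t) * Phi x2.
Proof.
  intros Hx Ht. set (xc := t * x1 + (1 - t) * x2).
  assert (Hc : x1 <= xc <= x2) by (unfold xc; nra).
  (* the slopes of Phi left and right of xc compare through the density at xc *)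
  assert (Hleft : Phi xc - Phi x1 <= (xc - x1) * std_normal_pdf xc).
  { replace (Phi xc - Phi x1) with (RInt std_normal_pdf x1 xc)
      by (pose proof (Phi_diff xc x1); simpl in *; lra).
    refine (proj2 (RInt_nondecr_bounds _ _ _ _ (pdf_ex_RInt _ _) _)); [lra |].
    intros; apply pdf_nondecr_nonpos; lra. }
  assert (Hright : (x2 - xc) * std_normal_pdf xc <= Phi x2 - Phi xc).
  { replace (Phi x2 - Phi xc) with (RInt std_normal_pdf xc x2)
      by (pose proof (Phi_diff x2 xc); simpl in *; lra).
    refine (proj1 (RInt_nondecr_bounds _ _ _ _ (pdf_ex_RInt _ _) _)); [lra |].
    intros; apply pdf_nondecr_nonpos; lra. }
  replace (xc - x1) with ((1 - t) * (x2 - x1)) in Hleft by (unfold xc; ring).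
  replace (x2 - xc) with (t * (x2 - x1)) in Hright by (unfold xc; ring).
  apply Rmult_le_compat_l with (r := t) in Hleft; [| lra].
  apply Rmult_le_compat_l with (r := 1 - t) in Hright; [| lra].
  nra.
Qed.

Lemma Phi_convex_nonpos (x1 x2 t : R) : x1 <= 0 -> x2 <= 0 -> 0 <= t <= 1 ->
  Phi (t * x1 + (1 - t) * x2) <= t * Phi x1 + (1 - t) * Phi x2.
Proof.
  intros Hx1 Hx2 Ht. destruct (Rle_dec x1 x2) as [H12 | H21].
  - apply Phi_convex_ordered; lra.
  - replace (t * x1 + (1 - t) * x2) with ((1 - t) * x2 + (1 - (1 - t)) * x1) by ring.
    pose proof (Phi_convex_ordered x2 x1 (1 - t) ltac:(lra) ltac:(lra)). lra.
Qed.

Lemma sum_f_R0_convex_bound (n : nat) (g f1 f2 : nat -> R) (t : R) :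
  (forall i, (i <= n)%nat -> g i <= t * f1 i + (1 - t) * f2 i) ->
  sum_f_R0 g n <= t * sum_f_R0 f1 n + (1 - t) * sum_f_R0 f2 n.
Proof.
  induction n as [| n IH]; intros Hg; simpl; [apply Hg; lia |].
  assert (sum_f_R0 g n <= t * sum_f_R0 f1 n + (1 - t) * sum_f_R0 f2 n)
    by (apply IH; intros; apply Hg; lia).
  assert (g (S n) <= t * f1 (S n) + (1 - t) * f2 (S n)) by (apply Hg; lia).
  lra.
Qed.

Lemma sum_except_convex_bound (k b : nat) (g f1 f2 : nat -> R) (t : R) :
  (1 <= k)%nat ->
  (forall i, (i < k)%nat -> i <> b -> g i <= t * f1 i + (1 - t) * f2 i) ->
  sum_except k b g <= t * sum_except k b f1 + (1 - t) * sum_except k b f2.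
Proof.
  intros Hk Hg. unfold sum_except. apply sum_f_R0_convex_bound. intros i Hi.
  destruct (Nat.eq_dec i b); [lra | apply Hg; [lia | assumption]].
Qed.

Lemma sum_f_R0_convex_comb (n : nat) (w v : nat -> R) (t : R) :
  sum_f_R0 (fun i => t * w i + (1 - t) * v i) n
  = t * sum_f_R0 w n + (1 - t) * sum_f_R0 v n.
Proof. induction n as [| n IH]; simpl; [ring | rewrite IH; ring]. Qed.

Lemma sigma_ib_eq (T : R) (sigma : nat -> R) (b i : nat) (w : nat -> R) :
  0 < T -> 0 < w i -> 0 < w b ->
  sigma_ib T sigma b i w = sqrt (sigma i ^ 2 / T / w i + sigma b ^ 2 / T / w b).
Proof. intros HT Hi Hb. unfold sigma_ib. f_equal. field. lra. Qed.

Lemma false_selection_convex (T delta : R) (sigma : nat -> R) (b i : nat)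
    (w v : nat -> R) (t : R) :
  0 < T -> 0 < delta -> 0 < sigma i -> 0 < sigma b ->
  0 < w i -> 0 < w b -> 0 < v i -> 0 < v b -> 0 <= t <= 1 ->
  Phi (- (delta / sigma_ib T sigma b i (fun j => t * w j + (1 - t) * v j)))
  <= t * Phi (- (delta / sigma_ib T sigma b i w))
     + (1 - t) * Phi (- (delta / sigma_ib T sigma b i v)).
Proof.
  intros HT Hd Hsi Hsb Hwi Hwb Hvi Hvb Ht.
  set (A := sigma i ^ 2 / T). set (C := sigma b ^ 2 / T).
  assert (HA : 0 < A) by (unfold A; apply Rdiv_lt_0_compat; nra).
  assert (HC : 0 < C) by (unfold C; apply Rdiv_lt_0_compat; nra).
  set (z := fun x y => 1 / sqrt (A / x + C / y)).
  assert (Hz : forall u : nat -> R, 0 < u i -> 0 < u b ->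
            delta / sigma_ib T sigma b i u = delta * z (u i) (u b)).
  { intros u Hui Hub. rewrite sigma_ib_eq by assumption. unfold z, A, C, Rdiv. ring. }
  assert (Hz_nonneg : forall x y, 0 < x -> 0 < y -> 0 <= z x y).
  { intros x y Hx Hy. unfold z. left. apply Rdiv_lt_0_compat; [lra |].
    apply sqrt_lt_R0, Rplus_lt_0_compat; apply Rdiv_lt_0_compat; lra. }
  rewrite !Hz by (simpl; nra).
  pose proof (inv_sqrt_sum_concave A C (w i) (w b) (v i) (v b) t
                HA HC Hwi Hwb Hvi Hvb Ht) as Hconc.
  fold (z (w i) (w b)) (z (v i) (v b)) in Hconc.
  fold (z (t * w i + (1 - t) * v i) (t * w b + (1 - t) * v b)) in Hconc.
  pose proof (Hz_nonneg _ _ Hwi Hwb). pose proof (Hz_nonneg _ _ Hvi Hvb).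
  eapply Rle_trans; [apply Phi_nondecr |].
  - apply Ropp_le_contravar.
    apply Rmult_le_compat_l with (r := delta) in Hconc; [exact Hconc | lra].
  - replace (- (delta * (t * z (w i) (w b) + (1 - t) * z (v i) (v b))))
      with (t * - (delta * z (w i) (w b)) + (1 - t) * - (delta * z (v i) (v b)))
      by ring.
    apply Phi_convex_nonpos; [nra | nra | exact Ht].
Qed.

Lemma APCS_concave (k b : nat) (mu sigma : nat -> R) (T : R) :
  (1 <= k)%nat -> (b < k)%nat ->
  (forall i, (i < k)%nat -> i <> b -> mu b < mu i) ->
  (forall i, (i < k)%nat -> 0 < sigma i) -> 0 < T ->
  concave_on (pos_orthant k) (APCS k b T mu sigma).
Proof.
  intros Hk Hb Hmu Hsig HT w v t Hw Hv Ht. unfold APCS.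
  assert (Hterm := fun i Hi Hib =>
    false_selection_convex T (mu i - mu b) sigma b i w v t HT
      ltac:(pose proof (Hmu i Hi Hib); lra) (Hsig i Hi) (Hsig b Hb)
      (Hw i Hi) (Hw b Hb) (Hv i Hi) (Hv b Hb) Ht).
  pose proof (sum_except_convex_bound k b _ _ _ t Hk Hterm). lra.
Qed.

Lemma simplex_feasible_convex (k : nat) : convex_set (simplex_feasible k).
Proof.
  intros w v t [Hw Sw] [Hv Sv] Ht. split.
  - intros i Hi. pose proof (Hw i Hi). pose proof (Hv i Hi).
    destruct (Req_dec t 0) as [-> | Ht0]; nra.
  - rewrite sum_f_R0_convex_comb, Sw, Sv. ring.
Qed.

Theorem lemma1 (k b : nat) (mu sigma : nat -> R) (T : R) :
  (2 <= k)%nat -> (b < k)%nat ->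
  (forall i, (i < k)%nat -> i <> b -> mu b < mu i) ->
  (forall i, (i < k)%nat -> 0 < sigma i) ->
  0 < T ->
  concave_on (pos_orthant k) (APCS k b T mu sigma) /\
  convex_set (simplex_feasible k).
Proof.
  intros Hk Hb Hmu Hsig HT. split.
  - apply APCS_concave; auto. lia.
  - apply simplex_feasible_convex.
Qed.
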